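(* Let $Q=(q_n)_{n\ge1}$ be a basic sequence that is infinite in limit, let $F$ be a $Q$-special sequence, and let $(a,b,1)\in S_Q$. Then the finite sequence $y_{F,a,b}=\left(\frac{F_{(a,b,c)}}{q_{\phi_Q(a,b,c)}}\right)_{c=1}^a$ is an almost-arithmetic progression-$\left(\frac1a,\frac1a\right)$, and its star discrepancy satisfies $D^*(y_{F,a,b})\le\frac2a$.
   Context: A basic sequence is a sequence $Q=(q_n)_{n\ge1}$ of integers with $q_n\ge 2$; it is infinite in limit if $q_n\to\infty$. $\mathbb{N}$ denotes the positive integers. For each positive integer $j$ let $\nu_j=\min\{N : q_m\ge 2j^2 \text{ for all } m\ge N\}$. Define $l_1=\max(\nu_2-1,1)$ and, recursively for $i\ge 2$, $l_i=\max\big(\min\{k\in\mathbb{N} : l_1+2l_2+\cdots+(i-1)l_{i-1}+ik\ge \nu_{i+1}-1\},1\big)$. Put $L_i=\sum_{j=1}^i jl_j$ (with $L_0=0$). Let $S_Q=\{(a,b,c)\in\mathbb{N}^3 : b\le l_a,\ c\le a\}$ and $\phi_Q(a,b,c)=L_{a-1}+(b-1)a+c$; $\phi_Q$ is a bijection $S_Q\to\mathbb{N}$. A $Q$-special sequence is a family of integers $F=(F_{(a,b,c)})_{(a,b,c)\in S_Q}$ with $F_{(a,b,1)}=0$ for all $(a,b,1)\in S_Q$ and $\frac{F_{(a,b,c)}}{q_{\phi_Q(a,b,c)}}\in\left[\frac{c-1}{a}-\frac{1}{2a^2},\frac{c-1}{a}+\frac{1}{2a^2}\right]$ for $(a,b,c)\in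 S_Q$ with $c>1$. For $0\le\delta<1$ and $\varepsilon>0$, a finite sequence $x_1<x_2<\cdots<x_N$ in $[0,1)$ is an almost-arithmetic progression-$(\delta,\varepsilon)$ if there is $\eta$ with $0<\eta\le\varepsilon$ such that $0\le x_1\le\eta+\delta\eta$; $\eta-\delta\eta\le x_{n+1}-x_n\le\eta+\delta\eta$ for $1\le n\le N-1$; and $1-\eta-\delta\eta\le x_N<1$. For a finite sequence $z=(z_1,\dots,z_n)$ in $[0,1)$, its star discrepancy is $D^*(z)=\sup_{0<\gamma\le1}\left|\frac{\#\{k\le n: z_k\in[0,\gamma)\}}{n}-\gamma\right|$. *)

From HB Require Import structures.
From mathcomp Require Import all_boot all_order all_algebra.
From mathcomp Require Import boolp classical_sets reals.
From mathcomp Require Import zify.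
Set Implicit Arguments. Unset Strict Implicit. Unset Printing Implicit Defensive.
Import Order.TTheory GRing.Theory Num.Theory.

(* A sequence Q = (q_n)_{n>=1} is represented by q : nat -> nat; q 0 is unused. *)
Definition basic_seq (q : nat -> nat) : Prop := forall n, (0 < n)%N -> (2 <= q n)%N.

Definition infinite_in_limit (q : nat -> nat) : Prop :=
  forall M, exists N, forall n, (N <= n)%N -> (M <= q n)%N.

Definition nu_pred (q : nat -> nat) (j : nat) : pred nat :=
  fun N => `[< (0 < N)%N /\ forall m, (N <= m)%N -> (2 * j ^ 2 <= q m)%N >].

Definition nu (q : nat -> nat) (j : nat) : nat :=
  match pselect (exists N, nu_pred q j N) with
  | left h => ex_minn h
  | right _ => 0%N
  end.

(* for i = i'.+2 : { k in N : Lprev + i k >= nu_{i+1} - 1 } is nonempty *)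
Definition l_pred (q : nat -> nat) (i' Lprev : nat) : pred nat :=
  fun k => (0 < k)%N && (nu q i'.+3 - 1 <= Lprev + i'.+2 * k)%N.

Lemma l_pred_ex (q : nat -> nat) (i' Lprev : nat) : exists k, l_pred q i' Lprev k.
Proof.
exists (nu q i'.+3 - 1).+1; rewrite /l_pred /=.
lia.
Qed.

(* l_i given Lprev = L_{i-1} = l_1 + 2 l_2 + ... + (i-1) l_{i-1} *)
Definition l_step (q : nat -> nat) (i Lprev : nat) : nat :=
  match i with
  | 0 => 0%N
  | 1 => maxn (nu q 2 - 1) 1
  | i'.+2 => maxn (ex_minn (l_pred_ex q i' Lprev)) 1
  end.

Fixpoint LL (q : nat -> nat) (i : nat) : nat :=
  match i with
  | 0 => 0%N
  | i'.+1 => (LL q i' + i'.+1 * l_step q i'.+1 (LL q i'))%N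
  end.

Definition ll (q : nat -> nat) (i : nat) : nat := l_step q i (LL q i.-1).

Definition inS (q : nat -> nat) (a b c : nat) : bool :=
  [&& (1 <= a)%N, (1 <= b)%N, (b <= ll q a)%N, (1 <= c)%N & (c <= a)%N].

Definition phi (q : nat -> nat) (a b c : nat) : nat :=
  (LL q a.-1 + (b - 1) * a + c)%N.

Local Open Scope ring_scope.

Definition Q_special (R : realType) (q : nat -> nat) (F : nat -> nat -> nat -> int) : Prop :=
  (forall a b, inS q a b 1 -> F a b 1%N = 0) /\
  (forall a b c, inS q a b c -> (1 < c)%N ->
     ((c%:R - 1) / a%:R - 1 / (2 * a%:R ^+ 2) <= (F a b c)%:~R / (q (phi q a b c))%:R :> R) /\
     ((F a b c)%:~R / (q (phi q a b c))%:R <= (c%:R - 1) / a%:R + 1 / (2 * a%:R ^+ 2) :> R)).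

(* A finite sequence x_1,...,x_N is represented by x : nat -> R (indices 1..N). *)
Definition almost_AP (R : realType) (delta eps : R) (N : nat) (x : nat -> R) : Prop :=
  (forall n, (1 <= n <= N)%N -> 0 <= x n /\ x n < 1) /\
  (forall n, (1 <= n)%N -> (n < N)%N -> x n < x n.+1) /\
  exists eta : R, 0 < eta /\ eta <= eps /\
    0 <= x 1%N /\ x 1%N <= eta + delta * eta /\
    (forall n, (1 <= n)%N -> (n <= N - 1)%N ->
       eta - delta * eta <= x n.+1 - x n /\ x n.+1 - x n <= eta + delta * eta) /\
    1 - eta - delta * eta <= x N /\ x N < 1.

Definition star_discrepancy (R : realType) (n : nat) (z : nat -> R) : R :=
  sup [set d : R | exists gamma : R, 0 < gamma /\ gamma <= 1 /\
     d = `| (count (fun k => (0 <= z k) && (z k < gamma)) (iota 1 n))%:R / n%:R - gamma |].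

Definition yseq (R : realType) (q : nat -> nat) (F : nat -> nat -> nat -> int) (a b : nat)
  : nat -> R := fun c => (F a b c)%:~R / (q (phi q a b c))%:R.

(* The points y_c = F_(a,b,c) / q_(phi(a,b,c)) start at y_1 = 0 and lie within
   1/(2a^2) of the grid points (c-1)/a.  Consecutive gaps are therefore
   1/a +- 1/a^2, which is the almost-arithmetic-progression property, and the
   indices c with y_c in [0, g) contain all c < a g and none with c >= a g + 2,
   so the proportion of such c differs from g by at most 2/a. *)

From HB Require Import structures.
From mathcomp Require Import all_boot all_order all_algebra.
From mathcomp Require Import boolp classical_sets reals.
From mathcomp Require Import zify ring lra.
Import Order.TTheory GRing.Theory Num.Theory.
Local Open Scope ring_scope.

Lemma sub_in_count (T : eqType) (p1 p2 : pred T) (s : seq T) :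
  {in s, forall x, p1 x -> p2 x} -> (count p1 s <= count p2 s)%N.
Proof.
move=> p12; have -> : count p1 s = count (predI p1 (mem s)) s.
  by apply: eq_in_count => x /= ->; rewrite andbT.
by apply: sub_count => x /andP[p1x xs]; apply: p12.
Qed.

Section CountBelow.

Context {R : realDomainType}.

Lemma count_iota_succ (p : pred nat) n :
  count p (iota 1 n.+1) = (count p (iota 1 n) + p n.+1)%N.
Proof. by rewrite -[n.+1]addn1 iotaD count_cat /= add1n addn0 addn1. Qed.

Lemma count_iota_ltr_le (t : R) n : 0 <= t ->
  (count (fun k : nat => k%:R < t) (iota 1 n))%:R <= t.
Proof.
move=> t_ge0; elim: n => [|n IHn] //; rewrite count_iota_succ.
case: ltP => [n1_lt_t|_]; last by rewrite addn0.
have : (count (fun k : nat => (k%:R < t)%R) (iota 1 n) <= n)%N.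
  by rewrite -{2}(size_iota 1 n) count_size.
rewrite -(ler_nat R) natrD /= => cnt_le; rewrite -natr1 in n1_lt_t; lra.
Qed.

Lemma count_iota_ltr_ge (t : R) n : t <= n%:R ->
  t - 1 <= (count (fun k : nat => k%:R < t) (iota 1 n))%:R.
Proof.
elim: n => [/=|n IHn t_le]; first lra.
rewrite count_iota_succ natrD.
have p_ge0 : 0 <= ((n.+1%:R < t)%R : nat)%:R :> R by [].
have [t_le_n|n_lt_t] := lerP t n%:R; first by have := IHn t_le_n; lra.
have -> : count (fun k : nat => (k%:R < t)%R) (iota 1 n) = n.
  rewrite -{2}(size_iota 1 n) -count_predT; apply: eq_in_count => k.
  by rewrite mem_iota => /andP[_ k_le]; apply: le_lt_trans n_lt_t; rewrite ler_nat; lia.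
rewrite -natr1 in t_le; lra.
Qed.

End CountBelow.

Section NearGrid.

Variables (R : realType) (a : nat) (x : nat -> R).
Hypotheses (a_gt0 : (0 < a)%N) (x1_eq0 : x 1%N = 0)
  (x_near_grid : forall c, (1 < c <= a)%N ->
     `|x c - (c%:R - 1) / a%:R| <= 1 / (2 * a%:R ^+ 2)).

Let e : R := a%:R^-1.

Let a_gt0R : 0 < a%:R :> R. Proof. by rewrite ltr0n. Qed.

Let e_gt0 : 0 < e. Proof. by rewrite invr_gt0. Qed.

Let e_le1 : e <= 1. Proof. by rewrite invf_le1 // ler1n. Qed.

Let mul_nat_e : a%:R * e = 1. Proof. by rewrite mulfV // gt_eqF. Qed.

Let mul_natr_e (y : R) : a%:R * (y * e) = y.
Proof. by rewrite mulrCA mul_nat_e mulr1. Qed.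

Lemma near_grid_bounds c : (1 <= c <= a)%N ->
  (c%:R - 1) * e - e * e / 2 <= x c <= (c%:R - 1) * e + e * e / 2.
Proof.
case/andP=> c_ge1 c_le; have [c_eq1|c_gt1] := eqVneq c 1%N.
  by rewrite c_eq1 x1_eq0 subrr mul0r add0r; apply/andP; split; nra.
have := x_near_grid c; rewrite ltn_neqAle eq_sym c_gt1 c_ge1 c_le => /(_ isT).
suff -> : 1 / (2 * a%:R ^+ 2) = e * e / 2 :> R by rewrite ler_distl.
by rewrite /e; field; rewrite gt_eqF.
Qed.

Lemma near_grid_unit_interval n : (1 <= n <= a)%N -> 0 <= x n < 1.
Proof.
move=> n_range; have /andP[lo hi] := near_grid_bounds _ n_range.
case/andP: n_range => n_ge1 n_le.
have n_le' : n%:R <= a%:R :> R by rewrite ler_nat.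
have [->|n_ne1] := eqVneq n 1%N; first by rewrite x1_eq0 ltr01 lexx.
have n_ge2 : 2%:R <= n%:R :> R by rewrite ler_nat ltn_neqAle eq_sym n_ne1.
have e_pos := e_gt0; have e_le_1 := e_le1; have ae := mul_nat_e.
have ee : e * e <= e by nra.
have ne : e <= (n%:R - 1) * e by nra.
have ne1 : (n%:R - 1) * e <= 1 - e by nra.
apply/andP; split; lra.
Qed.

Lemma near_grid_step n : (1 <= n < a)%N ->
  e - e * e <= x n.+1 - x n <= e + e * e.
Proof.
case/andP=> n_ge1 n_lt.
have /andP[lo hi] := near_grid_bounds n ltac:(by rewrite n_ge1 ltnW).
have /andP[lo' hi'] := near_grid_bounds n.+1 ltac:(by rewrite n_lt).
rewrite -natr1 in lo' hi'.
apply/andP; split; nra.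
Qed.

Lemma near_grid_almost_AP : almost_AP e e a x.
Proof.
have e_pos := e_gt0; have ae := mul_nat_e.
have a_range : (1 <= a <= a)%N by rewrite a_gt0 leqnn.
split; first by move=> n /near_grid_unit_interval/andP[].
split.
  move=> n n_ge1 n_lt; have /andP[step _] := near_grid_step n ltac:(by rewrite n_ge1).
  have a_ge2 : 2%:R <= a%:R :> R by rewrite ler_nat; apply: leq_ltn_trans n_lt.
  have : e * e < e by nra.
  lra.
exists e; do 2!split => //; rewrite x1_eq0 lexx; do 2!split => //; first nra.
split.
  move=> n n_ge1 n_le; apply/andP; apply: near_grid_step.
  by rewrite n_ge1 /=; lia.
have /andP[lo _] := near_grid_bounds a a_range.
have /andP[_ ->] := near_grid_unit_interval _ a_range.
split => //; rewrite mulrBl mul1r ae in lo; nra.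
Qed.

Lemma near_grid_count_ge g : g <= 1 ->
  a%:R * g - 1 <= (count (fun k => (0 <= x k) && (x k < g)) (iota 1 a))%:R.
Proof.
move=> g_le1; have e_pos := e_gt0.
have ag_le : a%:R * g <= a%:R by rewrite -[leRHS]mulr1 ler_wpM2l // ltW.
apply: le_trans (count_iota_ltr_ge _ _ ag_le) _.
rewrite ler_nat; apply: sub_in_count => k; rewrite mem_iota add1n ltnS => k_range k_lt.
have /andP[_ hi] := near_grid_bounds k k_range.
have /andP[-> _] := near_grid_unit_interval _ k_range.
have : k%:R * e < g by rewrite -(ltr_pM2l a_gt0R) mul_natr_e.
have := e_le1; nra.
Qed.

Lemma near_grid_count_le g : 0 <= g ->
  (count (fun k => (0 <= x k) && (x k < g)) (iota 1 a))%:R <= a%:R * g + 2.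
Proof.
move=> g_ge0; have e_pos := e_gt0.
have ag2_ge0 : 0 <= a%:R * g + 2 by rewrite addr_ge0 ?mulr_ge0 // ltW.
apply: le_trans (count_iota_ltr_le _ a ag2_ge0).
rewrite ler_nat; apply: sub_in_count => k; rewrite mem_iota add1n ltnS => k_range.
case/andP=> _ xk_lt /=; have /andP[lo _] := near_grid_bounds k k_range.
have : ((k%:R - 1) - e / 2) * e < g by lra.
rewrite -(ltr_pM2l a_gt0R) mul_natr_e.
have := e_le1; lra.
Qed.

Lemma near_grid_star_discrepancy : star_discrepancy a x <= 2 / a%:R.
Proof.
apply: ge_sup; first by eexists; exists 1; do 2!split => //; rewrite ltr01.
move=> _ [g [g_gt0 [g_le1 ->]]].
have := near_grid_count_ge _ g_le1; have := near_grid_count_le _ (ltW g_gt0).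
set m := (count _ _)%:R => m_le m_ge.
change (`|m * e - g| <= 2 * e); rewrite ler_distl.
have e_pos := e_gt0; have ae := mul_nat_e.
apply/andP; split; nra.
Qed.

End NearGrid.

Lemma inS_range {q a b} c : inS q a b 1 -> (1 <= c <= a)%N -> inS q a b c.
Proof. by rewrite /inS => /and5P[-> -> -> _ _] /andP[-> ->]. Qed.

Lemma Q_special_yseq_near_grid {R : realType} {q F a b} :
  Q_special R q F -> inS q a b 1 ->
  yseq R q F a b 1 = 0 /\
  forall c, (1 < c <= a)%N ->
    `|yseq R q F a b c - (c%:R - 1) / a%:R| <= 1 / (2 * a%:R ^+ 2).
Proof.
move=> [F_first F_near] hab; split; first by rewrite /yseq F_first ?mul0r.
move=> c /andP[c_gt1 c_le]; rewrite ler_distl.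
have c_range : (1 <= c <= a)%N by rewrite (ltnW c_gt1).
have [lo hi] := F_near a b c (inS_range c hab c_range) c_gt1.
by rewrite /yseq lo hi.
Qed.

Theorem mainTheorem14 (R : realType) (q : nat -> nat)
  (hbasic : basic_seq q) (hinf : infinite_in_limit q)
  (F : nat -> nat -> nat -> int) (hF : Q_special R q F)
  (a b : nat) (hab : inS q a b 1) :
  almost_AP (a%:R^-1) (a%:R^-1) a (yseq R q F a b) /\
  star_discrepancy a (yseq R q F a b) <= 2 / a%:R.
Proof.
have a_gt0 : (0 < a)%N by case/and5P: hab.
have [y1_eq0 y_near_grid] := Q_special_yseq_near_grid hF hab.
split; first exact: near_grid_almost_AP.
exact: near_grid_star_discrepancy.
Qed.
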